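(* Let $h>0$, $\mathbb{T}:=\{0,h,2h,\ldots\}$, $n\in\mathbb{N}$, and $p_0,\ldots,p_{n-1}\in\mathbb{C}\setminus\{-\tfrac1h\}$; define $p:\mathbb{T}\to\mathbb{C}$ by $p(t)=p_k$ if $\tfrac th\equiv k\pmod n$, $k\in\{0,\ldots,n-1\}$, where $p$ is periodic with period $n$ and not periodic with any smaller period. Consider $$\Delta_h x(t)-p(t)x(t)=0,\qquad t\in\mathbb{T},\qquad(\ast)$$ with $\Delta_hx(t):=\frac{x(t+h)-x(t)}{h}$. Let $e_p(t):=\prod_{j=0}^{t/h-1}(1+hp(jh))$ (empty product $=1$), so $|e_p(nh)|=\prod_{i=0}^{n-1}|1+hp_i|$. For $k\in\{0,\ldots,n-1\}$ let $$S_k:=\sum_{j=1}^{n}\frac{1}{\prod_{i=0}^{j-1}|1+hp_{(k+i)\bmod n}|}.$$ Assume $0<|e_p(nh)|\ne1$. Let $\varepsilon>0$ be fixed and $\phi:\mathbb{T}\to\mathbb{C}$ satisfy $|\Delta_h\phi(t)-p(t)\phi(t)|\le\varepsilon$ for all $t\in\mathbb{T}$. Then: (i) If $|e_p(nh)|>1$, then $\lim_{t\to\infty}\frac{\phi(t)}{e_p(t)}$ exists, and $x(t):=\left(\lim_{s\to\infty}\frac{\phi(s)}{e_p(s)}\right)e_p(t)$ is the unique solution of $(\ast)$ with $|\phi(t)-x(t)|\le K_n\varepsilon$ for all $t\in\mathbb{T}$, where $$K_n:=\frac{h|e_p(nh)|}{-1+|e_p(nh)|}\max\{S_0,S_1,\ldots,S_{n-1}\};$$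 moreover $K_n$ is the minimum Ulam stability constant for $(\ast)$. (ii) If $0<|e_p(nh)|<1$, then any solution $x$ of $(\ast)$ with $|\phi(0)-x(0)|<\varepsilon h\frac{|e_p(nh)|S_0}{1-|e_p(nh)|}$ satisfies $$|\phi(t)-x(t)|<\frac{\varepsilon h|e_p(nh)|}{1-|e_p(nh)|}\max\{S_0,S_1,\ldots,S_{n-1}\}$$ for all $t\in\mathbb{T}$.
   Context: A constant $K>0$ is an Ulam stability constant for $(\ast)$ on $\mathbb{T}$ if for every $\varepsilon>0$ and every $\phi:\mathbb{T}\to\mathbb{C}$ with $|\Delta_h\phi(t)-p(t)\phi(t)|\le\varepsilon$ for all $t\in\mathbb{T}$, there is a solution $x$ of $(\ast)$ with $|\phi(t)-x(t)|\le K\varepsilon$ for all $t\in\mathbb{T}$. ''Minimum'' means $K_n$ is such a constant and no positive number smaller than $K_n$ is. Explicitly, $S_0=\frac{1}{|1+hp_0|}+\frac{1}{|1+hp_0||1+hp_1|}+\cdots+\frac{1}{|1+hp_0|\cdots|1+hp_{n-1}|}$ and $S_k$ is the analogous sum starting at $p_k$ and cycling through $p_{n-1},p_0,\ldots,p_{k-1}$. *)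

From Stdlib Require Import Reals List Arith.
From Coquelicot Require Import Coquelicot.
Import ListNotations.

(* Time scale T = {0, h, 2h, ...} is indexed by m : nat, t = m*h.
   A function T -> C is represented as x : nat -> C with x m = x(m h). *)

Definition pper (n : nat) (pk : nat -> C) (m : nat) : C := pk (m mod n).

Definition ep (h : R) (n : nat) (pk : nat -> C) (m : nat) : C :=
  fold_right Cmult (RtoC 1)
    (map (fun j => Cplus (RtoC 1) (Cmult (RtoC h) (pper n pk j))) (seq 0 m)).

Definition Dh (h : R) (x : nat -> C) (m : nat) : C :=
  Cdiv (Cminus (x (S m)) (x m)) (RtoC h).

Definition is_solution (h : R) (n : nat) (pk : nat -> C) (x : nat -> C) : Prop :=
  forall m : nat, Cminus (Dh h x m) (Cmult (pper n pk m) (x m)) = RtoC 0.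

Definition Sk (h : R) (n : nat) (pk : nat -> C) (k : nat) : R :=
  fold_right Rplus 0
    (map (fun j => / fold_right Rmult 1
            (map (fun i => Cmod (Cplus (RtoC 1) (Cmult (RtoC h) (pk ((k + i) mod n)))))
                 (seq 0 j)))
         (seq 1 n)).

(* max{S_0, ..., S_{n-1}} (all S_k > 0, so the default 0 is irrelevant for n >= 1) *)
Definition Smax (h : R) (n : nat) (pk : nat -> C) : R :=
  fold_right Rmax 0 (map (Sk h n pk) (seq 0 n)).

Definition ulam_constant (h : R) (n : nat) (pk : nat -> C) (K : R) : Prop :=
  0 < K /\
  forall eps : R, 0 < eps ->
  forall phi : nat -> C,
    (forall m, Cmod (Cminus (Dh h phi m) (Cmult (pper n pk m) (phi m))) <= eps) ->
    exists x : nat -> C, is_solution h n pk x /\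
      forall m, Cmod (Cminus (phi m) (x m)) <= K * eps.

Definition min_ulam_constant (h : R) (n : nat) (pk : nat -> C) (K : R) : Prop :=
  ulam_constant h n pk K /\
  forall K' : R, 0 < K' -> K' < K -> ~ ulam_constant h n pk K'.

From Stdlib Require Import Reals List Arith Lia Lra.
From Coquelicot Require Import Coquelicot.
Import ListNotations.
Open Scope R_scope.

(* Write a_m = 1 + h p(mh) and E = |e_p(nh)|.  Solutions are x(mh) = x(0) e_p(mh), and the
   residual phi((m+1)h) - a_m phi(mh) of a perturbation has modulus at most h eps.  Since
   |e_p((m+n)h)| = E |e_p(mh)|, one has S_k = |e_p(kh)| sum_{j=1}^{n} 1/|e_p((k+j)h)|, so
   tail_m := E/(E-1) S_m/|e_p(mh)| satisfies tail_m - tail_(m+1) = 1/|e_p((m+1)h)|.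
   If E > 1, the increments of phi/e_p are bounded by h eps (tail_m - tail_(m+1)), hence
   phi/e_p converges to some L with |phi - L e_p| <= h eps |e_p| tail = h eps E S_m/(E-1);
   two solutions at bounded distance coincide because |e_p(knh)| = E^k is unbounded.  The
   perturbation h tail e_p has residual of modulus exactly h, and its only close solution
   is 0, at distance K_n at an index maximising S_k: this gives minimality of K_n.
   If E < 1, the same identity propagates |phi - x| < eps h E S_m/(1-E) by induction. *)

Lemma fold_right_snoc {A : Type} (op : A -> A -> A) (e x : A) (l : list A) :
  (forall a b c, op a (op b c) = op (op a b) c) ->
  (forall a, op e a = a) -> (forall a, op a e = a) ->
  fold_right op e (l ++ [x]) = op (fold_right op e l) x.
Proof.
  intros assoc unit_l unit_r.
  rewrite fold_right_app; simpl; rewrite unit_r.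
  induction l as [|a l IHl]; simpl; [now rewrite unit_l | now rewrite IHl, assoc].
Qed.

Lemma fold_right_Rplus_map_scal {A : Type} (c : R) (g : A -> R) (l : list A) :
  fold_right Rplus 0 (map (fun j => c * g j) l) = c * fold_right Rplus 0 (map g l).
Proof. induction l as [|a l IHl]; simpl; [ring | rewrite IHl; ring]. Qed.

Lemma fold_right_Rplus_pos (l : list R) :
  l <> [] -> (forall x, In x l -> 0 < x) -> 0 < fold_right Rplus 0 l.
Proof.
  induction l as [|a l IHl]; intros Hne Hpos; [congruence|].
  assert (Ha : 0 < a) by (apply Hpos; left; reflexivity).
  destruct l as [|b l]; simpl in *; [lra|].
  assert (0 < b + fold_right Rplus 0 l) by (apply IHl; [congruence | auto]).
  lra.
Qed.

Lemma fold_right_Rplus_seq_sub_shift (g : nat -> R) (s len : nat) :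
  fold_right Rplus 0 (map g (seq s len)) - fold_right Rplus 0 (map (fun j => g (S j)) (seq s len))
  = g s - g (s + len)%nat.
Proof.
  induction len as [|len IHlen].
  - rewrite Nat.add_0_r; simpl; ring.
  - rewrite seq_S, !map_app; cbn [map]; rewrite !fold_right_snoc by (intros; ring).
    rewrite Nat.add_succ_r. simpl. lra.
Qed.

Lemma fold_right_Rmax_ge (x : R) (l : list R) : In x l -> x <= fold_right Rmax 0 l.
Proof.
  induction l as [|a l IHl]; simpl; [tauto|].
  intros [<-|Hx]; [apply Rmax_l | eapply Rle_trans; [apply IHl, Hx | apply Rmax_r]].
Qed.

Lemma fold_right_Rmax_In (l : list R) :
  l <> [] -> (forall x, In x l -> 0 <= x) -> In (fold_right Rmax 0 l) l.
Proof.
  induction l as [|a l IHl]; intros Hne Hpos; [congruence|].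
  destruct l as [|b l].
  - left; simpl; symmetry; apply Rmax_left, Hpos; left; reflexivity.
  - set (y := fold_right Rmax 0 (b :: l)).
    assert (Hin : In y (b :: l))
      by (apply IHl; [congruence | intros; apply Hpos; right; assumption]).
    change (In (Rmax a y) (a :: b :: l)); unfold Rmax.
    destruct (Rle_dec a y); [right; exact Hin | left; reflexivity].
Qed.

Lemma Cmod_sub_comm (a b : C) : Cmod (a - b) = Cmod (b - a).
Proof. replace (a - b)%C with (- (b - a))%C by ring; apply Cmod_opp. Qed.

Lemma Cmod_sub_triangle (a b c : C) : Cmod (a - c) <= Cmod (a - b) + Cmod (b - c).
Proof. replace (a - c)%C with ((a - b) + (b - c))%C by ring; apply Cmod_triangle. Qed.

Lemma RtoC_pos_neq0 (x : R) : 0 < x -> RtoC x <> RtoC 0.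
Proof. intros Hx; apply Cmod_gt_0; rewrite Cmod_R, Rabs_pos_eq; lra. Qed.

Lemma telescoping_cvg (u : nat -> C) (r : nat -> R) :
  (forall m, 0 <= r m) ->
  (forall d, 0 < d -> exists N, forall m, (N <= m)%nat -> r m < d) ->
  (forall m, Cmod (u (S m) - u m) <= r m - r (S m)) ->
  exists L, filterlim u eventually (locally L) /\ forall m, Cmod (u m - L) <= r m.
Proof.
  intros r_ge0 r_small step.
  assert (tele : forall m k, Cmod (u (m + k)%nat - u m) <= r m - r (m + k)%nat).
  { intros m k; induction k as [|k IHk].
    - rewrite Nat.add_0_r; replace (u m - u m)%C with (RtoC 0) by ring; rewrite Cmod_0; lra.
    - rewrite Nat.add_succ_r.
      eapply Rle_trans; [apply Cmod_sub_triangle with (b := u (m + k)%nat)|].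
      specialize (step (m + k)%nat); lra. }
  assert (dist : forall m m', (m <= m')%nat -> Cmod (u m' - u m) <= r m).
  { intros m m' Hm; replace m' with (m + (m' - m))%nat by lia.
    specialize (tele m (m' - m)%nat); specialize (r_ge0 (m + (m' - m))%nat); lra. }
  destruct (proj1 (@filterlim_locally_cauchy nat
    (CompleteNormedModule.CompleteSpace _ C_CompleteNormedModule) eventually _ u)) as [L HL].
  { intros d; destruct (r_small (d / 2)) as [N HN]; [destruct d; simpl; lra|].
    exists (fun m => (N <= m)%nat); split; [exists N; auto|].
    intros v w Hv Hw; apply C_NormedModule_mixin_compat1.
    specialize (HN N (Nat.le_refl N)).
    assert (Hv' := dist N v Hv); assert (Hw' := dist N w Hw).
    change (Cmod (u w - u v) < d).
    eapply Rle_lt_trans; [apply Cmod_sub_triangle with (b := u N)|].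
    rewrite (Cmod_sub_comm (u N)); lra. }
  exists L; split; [exact HL|].
  intros m; apply Rle_plus_epsilon; intros d Hd.
  assert (Hd' : 0 < d / sqrt 2) by (apply Rdiv_lt_0_compat; [lra | apply sqrt_lt_R0; lra]).
  destruct (proj1 (filterlim_locally u L) HL (mkposreal _ Hd')) as [N HN].
  specialize (HN (Nat.max N m) (Nat.le_max_l _ _)).
  apply C_NormedModule_mixin_compat2 in HN; simpl in HN.
  replace (sqrt 2 * (d / sqrt 2)) with d in HN by (field; apply Rgt_not_eq, sqrt_lt_R0; lra).
  assert (Hm := dist m (Nat.max N m) (Nat.le_max_r _ _)).
  eapply Rle_trans; [apply Cmod_sub_triangle with (b := u (Nat.max N m))|].
  rewrite Cmod_sub_comm. change (Cmod (u (Nat.max N m) - L) < d) in HN. lra.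
Qed.

Section Equation.

Variables (h : R) (n : nat) (pk : nat -> C).
Hypotheses (h_pos : 0 < h) (n_pos : (0 < n)%nat).

Definition factor (m : nat) : C := (1 + h * pper n pk m)%C.
Definition eabs (m : nat) : R := Cmod (ep h n pk m).

Lemma ep_0 : ep h n pk 0 = RtoC 1.
Proof. reflexivity. Qed.

Lemma ep_S m : ep h n pk (S m) = (ep h n pk m * factor m)%C.
Proof.
  unfold ep; rewrite seq_S, map_app; cbn [map].
  rewrite fold_right_snoc; [reflexivity | intros; ring ..].
Qed.

Lemma factor_add_period m : factor (m + n) = factor m.
Proof.
  unfold factor, pper; replace (m + n)%nat with (m + 1 * n)%nat by lia.
  now rewrite Nat.Div0.mod_add.
Qed.

Lemma ep_add_period m : ep h n pk (m + n) = (ep h n pk n * ep h n pk m)%C.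
Proof.
  induction m as [|m IHm]; [rewrite Nat.add_0_l, ep_0; ring|].
  change (S m + n)%nat with (S (m + n)).
  rewrite !ep_S, IHm, factor_add_period; ring.
Qed.

Lemma eabs_0 : eabs 0 = 1.
Proof. apply Cmod_1. Qed.

Lemma eabs_S m : eabs (S m) = eabs m * Cmod (factor m).
Proof. unfold eabs; rewrite ep_S; apply Cmod_mult. Qed.

Lemma eabs_add_period m : eabs (m + n) = eabs n * eabs m.
Proof. unfold eabs; rewrite ep_add_period; apply Cmod_mult. Qed.

Lemma eabs_mul_period k : eabs (k * n) = eabs n ^ k.
Proof.
  induction k as [|k IHk]; [apply eabs_0|].
  change (S k * n)%nat with (n + k * n)%nat.
  rewrite Nat.add_comm, eabs_add_period, IHk; reflexivity.
Qed.

Lemma defect_eq (phi : nat -> C) m :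
  (Dh h phi m - pper n pk m * phi m)%C = ((phi (S m) - factor m * phi m) / h)%C.
Proof. unfold Dh, factor; field; apply RtoC_pos_neq0, h_pos. Qed.

Lemma Cmod_defect_le (phi : nat -> C) eps m :
  Cmod (Dh h phi m - pper n pk m * phi m) <= eps ->
  Cmod (phi (S m) - factor m * phi m) <= h * eps.
Proof.
  rewrite defect_eq, Cmod_div, Cmod_R, Rabs_pos_eq by (lra || apply RtoC_pos_neq0, h_pos).
  intros Hle; apply Rmult_le_compat_l with (r := h) in Hle; [|lra].
  unfold Rdiv in Hle; rewrite Rmult_comm, Rmult_assoc, Rinv_l, Rmult_1_r in Hle; lra.
Qed.

Lemma solution_S x m : is_solution h n pk x -> x (S m) = (factor m * x m)%C.
Proof.
  intros Hx; specialize (Hx m); rewrite defect_eq in Hx.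
  replace (x (S m)) with ((x (S m) - factor m * x m) / h * h + factor m * x m)%C
    by (field; apply RtoC_pos_neq0, h_pos).
  rewrite Hx; ring.
Qed.

Lemma solution_eq x m : is_solution h n pk x -> x m = (x 0%nat * ep h n pk m)%C.
Proof.
  intros Hx; induction m as [|m IHm]; [rewrite ep_0; ring|].
  rewrite (solution_S x m Hx), IHm, ep_S; ring.
Qed.

Lemma scaled_ep_solution (c : C) : is_solution h n pk (fun m => c * ep h n pk m)%C.
Proof. intros m; rewrite defect_eq, ep_S; unfold Cdiv; ring. Qed.

Lemma Sk_mod m : Sk h n pk (m mod n) = Sk h n pk m.
Proof.
  unfold Sk; f_equal; apply map_ext; intros j; do 2 f_equal; apply map_ext; intros i.
  now rewrite Nat.Div0.add_mod_idemp_l.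
Qed.

Lemma Sk_le_Smax m : Sk h n pk m <= Smax h n pk.
Proof.
  rewrite <- Sk_mod; apply fold_right_Rmax_ge, in_map, in_seq.
  split; [lia | apply Nat.mod_upper_bound; lia].
Qed.

Definition ulam_Kn : R := h * eabs n / (-1 + eabs n) * Smax h n pk.

Section Positive.

Hypothesis E_pos : 0 < eabs n.

Lemma eabs_pos m : 0 < eabs m.
Proof.
  assert (zero_persists : forall k, eabs m = 0 -> eabs (m + k) = 0).
  { intros k Hm; induction k as [|k IHk]; [now rewrite Nat.add_0_r|].
    rewrite Nat.add_succ_r, eabs_S, IHk; ring. }
  destruct (Cmod_ge_0 (ep h n pk m)) as [Hm|Hm]; [exact Hm|].
  assert (Hpow := eabs_mul_period m).
  replace (m * n)%nat with (m + (m * n - m))%nat in Hpow by nia.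
  rewrite zero_persists in Hpow by (symmetry; exact Hm).
  assert (0 < eabs n ^ m) by (apply pow_lt, E_pos); lra.
Qed.

Lemma Cmod_factor_pos m : 0 < Cmod (factor m).
Proof.
  assert (H := eabs_pos (S m)); rewrite eabs_S in H.
  destruct (Cmod_ge_0 (factor m)) as [Hf|Hf]; [exact Hf|].
  rewrite <- Hf in H; lra.
Qed.

Lemma ep_neq0 m : ep h n pk m <> RtoC 0.
Proof. apply Cmod_gt_0, eabs_pos. Qed.

Lemma factor_neq0 m : factor m <> RtoC 0.
Proof. apply Cmod_gt_0, Cmod_factor_pos. Qed.

Lemma prod_Cmod_factor m j :
  fold_right Rmult 1 (map (fun i => Cmod (factor (m + i))) (seq 0 j)) = eabs (m + j) / eabs m.
Proof.
  assert (Hm := eabs_pos m).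
  induction j as [|j IHj]; [rewrite Nat.add_0_r; simpl; field; lra|].
  rewrite seq_S, map_app; cbn [map]; rewrite fold_right_snoc by (intros; ring).
  rewrite IHj, Nat.add_succ_r, eabs_S; simpl; field; lra.
Qed.

Definition window (m : nat) : R :=
  fold_right Rplus 0 (map (fun j => / eabs (m + j)) (seq 1 n)).

Lemma Sk_window m : Sk h n pk m = eabs m * window m.
Proof.
  unfold Sk, window; rewrite <- fold_right_Rplus_map_scal; f_equal; apply map_ext; intros j.
  change (/ fold_right Rmult 1 (map (fun i => Cmod (factor (m + i))) (seq 0 j))
          = eabs m * / eabs (m + j)).
  rewrite prod_Cmod_factor; assert (eabs m > 0) by apply eabs_pos.
  assert (eabs (m + j) > 0) by apply eabs_pos; field; lra.
Qed.

Lemma window_pos m : 0 < window m.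
Proof.
  apply fold_right_Rplus_pos.
  - destruct n; [lia | discriminate].
  - intros x Hx; apply in_map_iff in Hx; destruct Hx as [j [<- _]].
    apply Rinv_0_lt_compat, eabs_pos.
Qed.

Lemma Sk_pos m : 0 < Sk h n pk m.
Proof. rewrite Sk_window; apply Rmult_lt_0_compat; [apply eabs_pos | apply window_pos]. Qed.

Lemma Smax_attained : exists k, Sk h n pk k = Smax h n pk.
Proof.
  unfold Smax.
  destruct (in_map_iff (Sk h n pk) (seq 0 n) (fold_right Rmax 0 (map (Sk h n pk) (seq 0 n))))
    as [[k [Hk _]] _].
  - apply fold_right_Rmax_In.
    + destruct n; [lia | discriminate].
    + intros x Hx; apply in_map_iff in Hx; destruct Hx as [k [<- _]]; apply Rlt_le, Sk_pos.
  - exists k; exact Hk.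
Qed.

Lemma window_step m : window m - window (S m) = (1 - / eabs n) / eabs (S m).
Proof.
  unfold window.
  rewrite (map_ext (fun j => / eabs (S m + j)) (fun j => / eabs (m + S j)))
    by (intros; now rewrite Nat.add_succ_r).
  rewrite fold_right_Rplus_seq_sub_shift.
  replace (m + (1 + n))%nat with (S m + n)%nat by lia.
  rewrite Nat.add_1_r, eabs_add_period.
  assert (eabs (S m) > 0) by apply eabs_pos; field; lra.
Qed.

Lemma window_add_period m : window (m + n) = / eabs n * window m.
Proof.
  unfold window; rewrite <- fold_right_Rplus_map_scal; f_equal; apply map_ext; intros j.
  replace (m + n + j)%nat with (m + j + n)%nat by lia.
  rewrite eabs_add_period; assert (eabs (m + j) > 0) by apply eabs_pos.
  field; lra.
Qed.

(* When |e_p(nh)| > 1, tail m is the sum of the series sum_{j > m} 1/|e_p(jh)|. *)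
Definition tail (m : nat) : R := eabs n / (eabs n - 1) * window m.

Lemma tail_step m : eabs n <> 1 -> tail m - tail (S m) = / eabs (S m).
Proof.
  intros E_neq1; unfold tail; rewrite <- Rmult_minus_distr_l, window_step.
  assert (eabs (S m) > 0) by apply eabs_pos.
  field; repeat split; lra.
Qed.

Lemma eabs_mul_tail m : eabs m * tail m = eabs n / (eabs n - 1) * Sk h n pk m.
Proof. unfold tail; rewrite Sk_window; ring. Qed.

Lemma tail_add_period m : tail (m + n) = / eabs n * tail m.
Proof. unfold tail; rewrite window_add_period; ring. Qed.

Section Contracting.

Hypothesis E_lt1 : eabs n < 1.

Lemma solution_deviation_lt (phi x : nat -> C) eps :
  (forall m, Cmod (Dh h phi m - pper n pk m * phi m) <= eps) ->
  is_solution h n pk x ->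
  Cmod (phi 0%nat - x 0%nat) < eps * h * eabs n * Sk h n pk 0 / (1 - eabs n) ->
  forall m, Cmod (phi m - x m) < eps * h * eabs n * Sk h n pk m / (1 - eabs n).
Proof.
  intros Hphi Hx H0.
  assert (bound_eq : forall m, eps * h * eabs n * Sk h n pk m / (1 - eabs n)
                               = - (h * eps) * (eabs m * tail m)).
  { intros m; rewrite eabs_mul_tail; field; lra. }
  intros m; rewrite bound_eq; induction m as [|m IHm]; [now rewrite <- bound_eq|].
  replace (phi (S m) - x (S m))%C
    with (factor m * (phi m - x m) + (phi (S m) - factor m * phi m))%C
    by (rewrite (solution_S x m Hx); ring).
  eapply Rle_lt_trans; [apply Cmod_triangle|]; rewrite Cmod_mult.
  assert (Hres := Cmod_defect_le phi eps m (Hphi m)).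
  assert (Hf := Cmod_factor_pos m).
  assert (Hm := eabs_pos m).
  assert (Htail : tail (S m) = tail m - / (eabs m * Cmod (factor m)))
    by (rewrite <- eabs_S; assert (H := tail_step m (Rlt_not_eq _ _ E_lt1)); lra).
  rewrite eabs_S, Htail.
  replace (- (h * eps) * (eabs m * Cmod (factor m) * (tail m - / (eabs m * Cmod (factor m)))))
    with (Cmod (factor m) * (- (h * eps) * (eabs m * tail m)) + h * eps)
    by (field; split; lra).
  apply Rmult_lt_compat_l with (r := Cmod (factor m)) in IHm; lra.
Qed.

End Contracting.

End Positive.

Section Expanding.

Hypothesis E_gt1 : 1 < eabs n.
Let E_pos : 0 < eabs n := Rlt_trans 0 1 _ Rlt_0_1 E_gt1.
Let E_neq1 : eabs n <> 1 := Rgt_not_eq _ _ E_gt1.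

Lemma tail_pos m : 0 < tail m.
Proof.
  unfold tail; apply Rmult_lt_0_compat; [apply Rdiv_lt_0_compat; lra | apply window_pos, E_pos].
Qed.

Lemma tail_vanishes d : 0 < d -> exists N, forall m, (N <= m)%nat -> tail m < d.
Proof.
  intros Hd.
  assert (nonincr : forall m k, tail (m + k) <= tail m).
  { intros m k; induction k as [|k IHk]; [rewrite Nat.add_0_r; lra|].
    rewrite Nat.add_succ_r; assert (H := tail_step E_pos (m + k) E_neq1).
    assert (0 < / eabs (S (m + k))) by apply Rinv_0_lt_compat, eabs_pos, E_pos; lra. }
  assert (geom : forall k, tail (k * n) = tail 0 * (/ eabs n) ^ k).
  { intros k; induction k as [|k IHk]; [simpl; ring|].
    change (S k * n)%nat with (n + k * n)%nat.
    rewrite Nat.add_comm, tail_add_period, IHk by exact E_pos; simpl; ring. }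
  assert (Hq : 0 < / eabs n < 1).
  { split; [apply Rinv_0_lt_compat, E_pos|].
    rewrite <- Rinv_1; apply Rinv_lt_contravar; lra. }
  assert (H0 := tail_pos 0).
  destruct (pow_lt_1_zero (/ eabs n)) with (y := d / tail 0%nat) as [N HN].
  { rewrite Rabs_pos_eq; lra. }
  { apply Rdiv_lt_0_compat; lra. }
  exists (N * n)%nat; intros m Hm.
  replace m with (N * n + (m - N * n))%nat by lia.
  eapply Rle_lt_trans; [apply nonincr|]; rewrite geom.
  specialize (HN N (Nat.le_refl N)); rewrite Rabs_pos_eq in HN by (apply pow_le; lra).
  apply Rmult_lt_compat_l with (r := tail 0%nat) in HN; [|exact H0].
  replace (tail 0%nat * (d / tail 0%nat)) with d in HN by (field; lra); exact HN.
Qed.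

Lemma solution_near_unique (phi x y : nat -> C) B :
  is_solution h n pk x -> is_solution h n pk y ->
  (forall m, Cmod (phi m - x m) <= B) -> (forall m, Cmod (phi m - y m) <= B) ->
  forall m, x m = y m.
Proof.
  intros Hx Hy Hxb Hyb.
  set (c := (x 0%nat - y 0%nat)%C).
  assert (Hc : forall k, Cmod c * eabs n ^ k <= B + B).
  { intros k; rewrite <- eabs_mul_period; unfold eabs; rewrite <- Cmod_mult.
    replace (c * ep h n pk (k * n))%C with (x (k * n)%nat - y (k * n)%nat)%C
      by (unfold c; rewrite (solution_eq x _ Hx), (solution_eq y _ Hy); ring).
    eapply Rle_trans; [apply Cmod_sub_triangle with (b := phi (k * n)%nat)|].
    rewrite Cmod_sub_comm; specialize (Hxb (k * n)%nat); specialize (Hyb (k * n)%nat); lra. }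
  assert (Hc0 : c = RtoC 0).
  { apply Cmod_eq_0; destruct (Cmod_ge_0 c) as [Hpos|]; [exfalso|auto].
    destruct (Pow_x_infinity (eabs n)) with (b := (B + B) / Cmod c + 1) as [N HN].
    { rewrite Rabs_pos_eq; lra. }
    specialize (HN N (Nat.le_refl N)); specialize (Hc N).
    rewrite Rabs_pos_eq in HN by (apply pow_le; lra); apply Rge_le in HN.
    apply Rmult_le_compat_l with (r := Cmod c) in HN; [|lra].
    replace (Cmod c * ((B + B) / Cmod c + 1)) with (B + B + Cmod c) in HN by (field; lra).
    lra. }
  intros m; rewrite (solution_eq x m Hx), (solution_eq y m Hy).
  replace (x 0%nat) with (y 0%nat + c)%C by (unfold c; ring).
  rewrite Hc0; ring.
Qed.

Lemma Sk_scal_le_Kn m : h * eabs n / (eabs n - 1) * Sk h n pk m <= ulam_Kn.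
Proof.
  unfold ulam_Kn; replace (-1 + eabs n) with (eabs n - 1) by ring.
  apply Rmult_le_compat_l; [|apply Sk_le_Smax].
  apply Rlt_le, Rdiv_lt_0_compat; [apply Rmult_lt_0_compat|]; lra.
Qed.

Lemma ep_quotient_cvg (phi : nat -> C) eps :
  (forall m, Cmod (Dh h phi m - pper n pk m * phi m) <= eps) ->
  exists L, filterlim (fun m => phi m / ep h n pk m)%C eventually (locally L) /\
    forall m, Cmod (phi m - L * ep h n pk m) <= ulam_Kn * eps.
Proof.
  intros Hphi.
  assert (eps_ge0 : 0 <= eps) by (eapply Rle_trans; [apply Cmod_ge_0 | apply (Hphi 0%nat)]).
  destruct (telescoping_cvg (fun m => phi m / ep h n pk m)%C (fun m => h * eps * tail m))
    as [L [HL Hdist]].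
  - intros m; apply Rmult_le_pos; [apply Rmult_le_pos; lra | apply Rlt_le, tail_pos].
  - intros d Hd.
    destruct (tail_vanishes (d / (h * eps + 1))) as [N HN]; [apply Rdiv_lt_0_compat; nra|].
    exists N; intros m Hm; specialize (HN m Hm); assert (Ht := tail_pos m).
    apply Rmult_lt_compat_l with (r := h * eps + 1) in HN; [|nra].
    replace ((h * eps + 1) * (d / (h * eps + 1))) with d in HN by (field; nra); nra.
  - intros m.
    replace (phi (S m) / ep h n pk (S m) - phi m / ep h n pk m)%C
      with ((phi (S m) - factor m * phi m) / ep h n pk (S m))%C
      by (rewrite ep_S; field; split; [apply ep_neq0 | apply factor_neq0]; exact E_pos).
    rewrite Cmod_div by (apply ep_neq0, E_pos); fold (eabs (S m)).
    rewrite <- Rmult_minus_distr_l, tail_step by (exact E_pos || exact E_neq1).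
    unfold Rdiv; apply Rmult_le_compat_r; [apply Rlt_le, Rinv_0_lt_compat, eabs_pos, E_pos|].
    apply Cmod_defect_le, Hphi.
  - exists L; split; [exact HL|]; intros m.
    replace (phi m - L * ep h n pk m)%C with (ep h n pk m * (phi m / ep h n pk m - L))%C
      by (field; apply ep_neq0, E_pos).
    rewrite Cmod_mult; fold (eabs m).
    specialize (Hdist m); assert (Hm := eabs_pos E_pos m).
    apply Rmult_le_compat_l with (r := eabs m) in Hdist; [|lra].
    replace (eabs m * (h * eps * tail m)) with (h * eps * (eabs m * tail m)) in Hdist by ring.
    rewrite (eabs_mul_tail E_pos) in Hdist.
    assert (HK := Sk_scal_le_Kn m).
    eapply Rle_trans; [exact Hdist|].
    replace (h * eps * (eabs n / (eabs n - 1) * Sk h n pk m))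
      with (eps * (h * eabs n / (eabs n - 1) * Sk h n pk m)) by (field; lra).
    rewrite (Rmult_comm ulam_Kn); apply Rmult_le_compat_l; assumption.
Qed.

(* A perturbation for which the bound of ep_quotient_cvg is attained, with eps = 1 and L = 0. *)
Definition extremal (m : nat) : C := (RtoC (h * tail m) * ep h n pk m)%C.

Lemma extremal_defect m : Cmod (Dh h extremal m - pper n pk m * extremal m) = 1.
Proof.
  rewrite defect_eq; unfold extremal.
  replace ((RtoC (h * tail (S m)) * ep h n pk (S m) - factor m * (RtoC (h * tail m) * ep h n pk m))
           / h)%C
    with (RtoC (tail (S m) - tail m) * ep h n pk (S m))%C
    by (rewrite ep_S, !RtoC_mult, RtoC_minus; field; apply RtoC_pos_neq0, h_pos).
  rewrite Cmod_mult, Cmod_R; fold (eabs (S m)).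
  replace (tail (S m) - tail m) with (- / eabs (S m))
    by (assert (H := tail_step E_pos m E_neq1); lra).
  assert (HS := eabs_pos E_pos (S m)).
  rewrite Rabs_Ropp, Rabs_pos_eq by (apply Rlt_le, Rinv_0_lt_compat, HS).
  field; lra.
Qed.

Lemma Cmod_extremal m : Cmod (extremal m) = h * eabs n / (eabs n - 1) * Sk h n pk m.
Proof.
  unfold extremal; rewrite Cmod_mult, Cmod_R; fold (eabs m).
  assert (Ht := tail_pos m).
  rewrite Rabs_pos_eq by (apply Rmult_le_pos; lra).
  replace (h * eabs n / (eabs n - 1) * Sk h n pk m)
    with (h * (eabs n / (eabs n - 1) * Sk h n pk m)) by (unfold Rdiv; ring).
  rewrite <- (eabs_mul_tail E_pos); ring.
Qed.

Lemma ulam_Kn_pos : 0 < ulam_Kn.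
Proof.
  destruct (Smax_attained E_pos) as [k Hk].
  eapply Rlt_le_trans; [|apply (Sk_scal_le_Kn k)].
  assert (0 < Sk h n pk k) by apply Sk_pos, E_pos.
  assert (0 < h * eabs n / (eabs n - 1)) by (apply Rdiv_lt_0_compat; nra).
  apply Rmult_lt_0_compat; assumption.
Qed.

Lemma ulam_constant_Kn : ulam_constant h n pk ulam_Kn.
Proof.
  split; [exact ulam_Kn_pos|].
  intros eps _ phi Hphi; destruct (ep_quotient_cvg phi eps Hphi) as [L [_ HL]].
  exists (fun m => L * ep h n pk m)%C; split; [apply scaled_ep_solution | exact HL].
Qed.

Lemma ulam_Kn_minimal K : K < ulam_Kn -> ~ ulam_constant h n pk K.
Proof.
  intros HK [_ Hulam].
  destruct (Hulam 1 Rlt_0_1 extremal (fun m => Req_le _ _ (extremal_defect m)))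
    as [x [Hx Hxb]].
  assert (Hx0 : forall m, x m = (0 * ep h n pk m)%C).
  { apply (solution_near_unique extremal x _ ulam_Kn Hx (scaled_ep_solution _)).
    - intros m; specialize (Hxb m); lra.
    - intros m; replace (extremal m - 0 * ep h n pk m)%C with (extremal m) by ring.
      rewrite Cmod_extremal; apply Sk_scal_le_Kn. }
  destruct (Smax_attained E_pos) as [k Hk].
  specialize (Hxb k); rewrite Hx0 in Hxb.
  replace (extremal k - 0 * ep h n pk k)%C with (extremal k) in Hxb by ring.
  rewrite Cmod_extremal, Hk in Hxb; unfold ulam_Kn in HK.
  replace (-1 + eabs n) with (eabs n - 1) in HK by ring; lra.
Qed.

Lemma min_ulam_constant_Kn : min_ulam_constant h n pk ulam_Kn.
Proof. split; [exact ulam_constant_Kn | intros K _; apply ulam_Kn_minimal]. Qed.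

End Expanding.

End Equation.

Theorem theorem4p3 (h : R) (n : nat) (pk : nat -> C) (eps : R) (phi : nat -> C) :
  0 < h ->
  (0 < n)%nat ->
  (forall k : nat, (k < n)%nat -> pk k <> RtoC (- / h)) ->
  (* p has minimal period n *)
  (forall d : nat, (0 < d < n)%nat -> ~ (forall m : nat, pper n pk (m + d) = pper n pk m)) ->
  0 < Cmod (ep h n pk n) ->
  Cmod (ep h n pk n) <> 1 ->
  0 < eps ->
  (forall m : nat, Cmod (Cminus (Dh h phi m) (Cmult (pper n pk m) (phi m))) <= eps) ->
  (* (i) *)
  (1 < Cmod (ep h n pk n) ->
    let Kn := h * Cmod (ep h n pk n) / (-1 + Cmod (ep h n pk n)) * Smax h n pk in
    exists L : C,
      filterlim (fun m => Cdiv (phi m) (ep h n pk m)) eventually (locally L) /\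
      is_solution h n pk (fun m => Cmult L (ep h n pk m)) /\
      (forall m : nat, Cmod (Cminus (phi m) (Cmult L (ep h n pk m))) <= Kn * eps) /\
      (forall y : nat -> C, is_solution h n pk y ->
         (forall m : nat, Cmod (Cminus (phi m) (y m)) <= Kn * eps) ->
         forall m : nat, y m = Cmult L (ep h n pk m)) /\
      min_ulam_constant h n pk Kn) /\
  (* (ii) *)
  (Cmod (ep h n pk n) < 1 ->
    forall x : nat -> C, is_solution h n pk x ->
      Cmod (Cminus (phi 0%nat) (x 0%nat))
        < eps * h * Cmod (ep h n pk n) * Sk h n pk 0 / (1 - Cmod (ep h n pk n)) ->
      forall m : nat, Cmod (Cminus (phi m) (x m))
        < eps * h * Cmod (ep h n pk n) / (1 - Cmod (ep h n pk n)) * Smax h n pk).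
Proof.
  intros h_pos n_pos _ _ E_pos _ eps_pos Hphi; split.
  - intros E_gt1 Kn.
    destruct (ep_quotient_cvg h n pk h_pos n_pos E_gt1 phi eps Hphi) as [L [Hlim Hclose]].
    exists L; split; [exact Hlim|]; split; [apply scaled_ep_solution, h_pos|].
    split; [exact Hclose|]; split.
    + intros y Hy Hyb m; symmetry.
      exact (solution_near_unique h n pk h_pos n_pos E_gt1 phi _ y (Kn * eps)
               (scaled_ep_solution h n pk h_pos L) Hy Hclose Hyb m).
    + exact (min_ulam_constant_Kn h n pk h_pos n_pos E_gt1).
  - intros E_lt1 x Hx H0 m.
    assert (Hdev := solution_deviation_lt h n pk h_pos n_pos E_pos E_lt1 phi x eps Hphi Hx H0 m).
    assert (HSk := Sk_le_Smax h n pk n_pos m).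
    unfold eabs in Hdev; set (E := Cmod (ep h n pk n)) in *.
    assert (Hc : 0 < eps * h * E / (1 - E))
      by (apply Rdiv_lt_0_compat; [repeat apply Rmult_lt_0_compat|]; lra).
    replace (eps * h * E * Sk h n pk m / (1 - E)) with (eps * h * E / (1 - E) * Sk h n pk m)
      in Hdev by (field; lra).
    apply Rmult_le_compat_l with (r := eps * h * E / (1 - E)) in HSk; lra.
Qed.
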